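(* Let $I$ be an open interval and $a_1,a_2\in I$ with $\cosh(a_1-a_2)\cos(a_1-a_2)\neq1$. Put $d:=a_1-a_2$, $C:=\cosh d$, $c:=\cos d$, $S:=\sinh d$, $s:=\sin d$, and $K:=2-2Cc$. Then for all $f\in\mathscr{C}^4(I)$ and $x\in I$, \[ \begin{aligned} K f(x)&=\Big(f(a_1)+\tfrac12\int_{a_1}^x(f^{(4)}-f)(t)\big(\sinh(a_1-t)-\sin(a_1-t)\big)dt\Big)\Big[(C-c)\big(\cosh(x-a_2)-\cos(x-a_2)\big)-(S+s)\big(\sinh(x-a_2)-\sin(x-a_2)\big)\Big]\\ &\quad+\Big(f'(a_1)+\tfrac12\int_{a_1}^x(f^{(4)}-f)(t)\big(\cosh(a_1-t)-\cos(a_1-t)\big)dt\Big)\Big[(C-c)\big(\sinh(x-a_2)-\sin(x-a_2)\big)-(S-s)\big(\cosh(x-a_2)-\cos(x-a_2)\big)\Big]\\ &\quad+\Big(f(a_2)+\tfrac12\int_{a_2}^x(f^{(4)}-f)(t)\big(\sinh(a_2-t)-\sin(a_2-t)\big)dt\Big)\Big[(C-c)\big(\cosh(x-a_1)-\cos(x-a_1)\big)+(S+s)\big(\sinh(x-a_1)-\sin(x-a_1)\big)\Big]\\ &\quad+\Big(f'(a_2)+\tfrac12\int_{a_2}^x(f^{(4)}-f)(t)\big(\cosh(a_2-t)-\cos(a_2-t)\big)dt\Big)\Big[(C-c)\big(\sinh(x-a_1)-\sin(x-a_1)\big)+(S-s)\big(\cosh(x-a_1)-\cos(x-a_1)\big)\Big].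 \end{aligned} \]
   Context: $\mathscr{C}^4(I)$ denotes the space of four times continuously differentiable complex-valued functions on $I$. *)

From Stdlib Require Export Reals.
From Coquelicot Require Export Coquelicot.

Definition in_open_interval (l u : Rbar) (x : R) : Prop :=
  Rbar_lt l x /\ Rbar_lt x u.

Definition C4_on (l u : Rbar) (f f1 f2 f3 f4 : R -> C) : Prop :=
  forall x, in_open_interval l u x ->
    is_derive f x (f1 x) /\ is_derive f1 x (f2 x) /\
    is_derive f2 x (f3 x) /\ is_derive f3 x (f4 x) /\ continuous f4 x.

Definition CInt (g : R -> C) (a b : R) : C :=
  @RInt C_R_CompleteNormedModule g a b.

From Stdlib Require Import Reals Lra Nsatz.
From Coquelicot Require Import Coquelicot.
Open Scope R_scope.

(* Integrating (f'''' - f) against sinh (a - t) - sin (a - t) and cosh (a - t) - cos (a - t)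
   by parts four times (both kernels are fixed by d^4/dt^4 and vanish to third order at a)
   expresses f(a) + 1/2 * integral and f'(a) + 1/2 * integral as explicit combinations of
   f, f', f'', f''' at x, with coefficients in cosh, sinh, cos, sin of x - a.  Writing these
   four representations for a = a1, a2 and combining them with the coefficients of the
   theorem eliminates f', f'', f''' at x; that this elimination leaves exactly K f(x) is a
   polynomial identity modulo cosh^2 - sinh^2 = 1 and cos^2 + sin^2 = 1. *)

Lemma in_open_interval_between (l u : Rbar) a x t :
  in_open_interval l u a -> in_open_interval l u x ->
  Rmin a x <= t <= Rmax a x -> in_open_interval l u t.
Proof.
  intros [Hla Hau] [Hlx Hxu] Ht.
  assert (Hbetween : a <= t <= x \/ x <= t <= a).
  { destruct (Rle_dec a x).
    - rewrite Rmin_left, Rmax_right in Ht by lra. lra.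
    - rewrite Rmin_right, Rmax_left in Ht by lra. lra. }
  split.
  - destruct l as [r| |]; simpl in *; try easy; lra.
  - destruct u as [r| |]; simpl in *; try easy; lra.
Qed.

Lemma scal_R_C (r : R) (z : C) : @scal R_Ring C_R_ModuleSpace r z = (RtoC r * z)%C.
Proof.
  destruct z as [p q]; apply injective_projections; simpl;
    unfold scal; simpl; unfold mult; simpl; ring.
Qed.

Lemma is_derive_RtoC_mult (k : R -> R) (F : R -> C) t k' F' :
  is_derive k t k' -> is_derive F t F' ->
  is_derive (fun t => (RtoC (k t) * F t)%C) t (RtoC k' * F t + RtoC (k t) * F')%C.
Proof.
  intros Hk HF.
  eapply filterdiff_ext_lin.
  - eapply filterdiff_ext; [intros y; apply scal_R_C|].
    apply (filterdiff_scal_fct t k F); [intros; apply Rmult_comm | exact Hk | exact HF].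
  - intros y; simpl. rewrite !scal_R_C.
    destruct (F t), F'; apply injective_projections; cbn; ring.
Qed.

Section FourthOrderIntegrationByParts.

Variables (l u : Rbar) (f f1 f2 f3 f4 : R -> C).
Hypothesis Hf : C4_on l u f f1 f2 f3 f4.

Variables (k0 k1 k2 k3 : R -> R).
Hypothesis Dk0 : forall t, is_derive k0 t (k1 t).
Hypothesis Dk1 : forall t, is_derive k1 t (k2 t).
Hypothesis Dk2 : forall t, is_derive k2 t (k3 t).
Hypothesis Dk3 : forall t, is_derive k3 t (k0 t).

(* Since k0'''' = k0, the derivative of this alternating sum telescopes to k0 (f'''' - f). *)
Definition jet (t : R) : C :=
  (RtoC (k0 t) * f3 t - RtoC (k1 t) * f2 t + RtoC (k2 t) * f1 t - RtoC (k3 t) * f t)%C.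

Lemma is_derive_jet t : in_open_interval l u t ->
  is_derive jet t ((f4 t - f t) * RtoC (k0 t))%C.
Proof.
  intros Ht. destruct (Hf t Ht) as (D0 & D1 & D2 & D3 & _).
  eapply filterdiff_ext_lin.
  - apply (@is_derive_minus R_AbsRing C_R_NormedModule);
      [apply (@is_derive_plus R_AbsRing C_R_NormedModule);
       [apply (@is_derive_minus R_AbsRing C_R_NormedModule)|]|];
      apply is_derive_RtoC_mult; eauto.
  - intros y; simpl. unfold jet.
    destruct (f t), (f1 t), (f2 t), (f3 t), (f4 t);
      apply injective_projections; cbn; ring.
Qed.

Lemma CInt_jet a x : in_open_interval l u a -> in_open_interval l u x ->
  CInt (fun t => ((f4 t - f t) * RtoC (k0 t))%C) a x = (jet x - jet a)%C.
Proof.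
  intros Ha Hx.
  unfold CInt; apply (@is_RInt_unique C_R_CompleteNormedModule).
  apply (@is_RInt_derive C_R_CompleteNormedModule jet);
    intros t Hat; pose proof (in_open_interval_between l u a x t Ha Hx Hat) as Ht.
  - exact (is_derive_jet t Ht).
  - destruct (Hf t Ht) as (Df & _ & _ & _ & Cf4).
    apply (continuous_ext (fun t => @scal R_Ring C_R_ModuleSpace (k0 t) (minus (f4 t) (f t)))).
    { intros y; rewrite scal_R_C; apply Cmult_comm. }
    apply (@continuous_scal R_UniformSpace R_AbsRing C_R_NormedModule).
    + apply (@ex_derive_continuous R_AbsRing (AbsRing_NormedModule R_AbsRing)).
      now exists (k1 t).
    + apply (@continuous_minus R_UniformSpace R_AbsRing C_R_NormedModule); [exact Cf4|].
      apply (@ex_derive_continuous R_AbsRing C_R_NormedModule). now exists (f1 t).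
Qed.

End FourthOrderIntegrationByParts.

Lemma is_derive_hyptrig a p q r s (k k' : R -> R) :
  (forall t, k t = p * sinh (a - t) + q * cosh (a - t) + r * sin (a - t) + s * cos (a - t)) ->
  (forall t, k' t = - q * sinh (a - t) - p * cosh (a - t) + s * sin (a - t) - r * cos (a - t)) ->
  forall t, is_derive k t (k' t).
Proof.
  intros Hk Hk' t. rewrite Hk'.
  apply (is_derive_ext (fun t => p * sinh (a - t) + q * cosh (a - t) + r * sin (a - t) + s * cos (a - t))).
  { intros; now rewrite Hk. }
  unfold sinh, cosh. auto_derive; [easy|]. unfold Rminus, Rdiv. ring.
Qed.

Lemma sinh_neg x : sinh (- x) = - sinh x.
Proof. unfold sinh. rewrite Ropp_involutive. field. Qed.

Lemma cosh_neg x : cosh (- x) = cosh x.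
Proof. unfold cosh. rewrite Ropp_involutive. field. Qed.

Lemma cosh_minus x y : cosh (x - y) = cosh x * cosh y - sinh x * sinh y.
Proof.
  unfold cosh, sinh, Rminus.
  rewrite !exp_plus, Ropp_plus_distr, exp_plus, Ropp_involutive. field.
Qed.

Lemma sinh_minus x y : sinh (x - y) = sinh x * cosh y - cosh x * sinh y.
Proof.
  unfold cosh, sinh, Rminus.
  rewrite !exp_plus, Ropp_plus_distr, exp_plus, Ropp_involutive. field.
Qed.

Lemma cosh2_sinh2 x : cosh x * cosh x - sinh x * sinh x = 1.
Proof.
  unfold cosh, sinh.
  assert (Hexp : exp x * exp (- x) = 1) by now rewrite <- exp_plus, Rplus_opp_r, exp_0.
  nra.
Qed.

Section KernelIdentities.

Variables (l u : Rbar) (f f1 f2 f3 f4 : R -> C).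
Hypothesis Hf : C4_on l u f f1 f2 f3 f4.

Lemma sinh_sin_kernel_identity a x : in_open_interval l u a -> in_open_interval l u x ->
  (f a + RtoC (1/2) * CInt (fun t => (f4 t - f t) * RtoC (sinh (a - t) - sin (a - t))) a x
   = RtoC (1/2) * (RtoC (sin (x - a) - sinh (x - a)) * f3 x + RtoC (cosh (x - a) - cos (x - a)) * f2 x
       - RtoC (sinh (x - a) + sin (x - a)) * f1 x + RtoC (cosh (x - a) + cos (x - a)) * f x))%C.
Proof.
  intros Ha Hx.
  rewrite (CInt_jet l u f f1 f2 f3 f4 Hf
             (fun t => sinh (a - t) - sin (a - t)) (fun t => - cosh (a - t) + cos (a - t))
             (fun t => sinh (a - t) + sin (a - t)) (fun t => - cosh (a - t) - cos (a - t)))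
    by (assumption
        || (apply (is_derive_hyptrig a 1 0 (-1) 0) + apply (is_derive_hyptrig a 0 (-1) 0 1)
            + apply (is_derive_hyptrig a 1 0 1 0) + apply (is_derive_hyptrig a 0 (-1) 0 (-1)));
          intros; ring).
  unfold jet. rewrite Rminus_diag, sinh_0, cosh_0, sin_0, cos_0.
  replace (a - x) with (- (x - a)) by ring.
  rewrite sinh_neg, cosh_neg, sin_neg, cos_neg.
  destruct (f a), (f x), (f1 x), (f2 x), (f3 x), (f2 a), (f1 a), (f3 a);
    apply injective_projections; simpl; field.
Qed.

Lemma cosh_cos_kernel_identity a x : in_open_interval l u a -> in_open_interval l u x ->
  (f1 a + RtoC (1/2) * CInt (fun t => (f4 t - f t) * RtoC (cosh (a - t) - cos (a - t))) a x
   = RtoC (1/2) * (RtoC (cosh (x - a) - cos (x - a)) * f3 x - RtoC (sinh (x - a) + sin (x - a)) * f2 x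
       + RtoC (cosh (x - a) + cos (x - a)) * f1 x + RtoC (sin (x - a) - sinh (x - a)) * f x))%C.
Proof.
  intros Ha Hx.
  rewrite (CInt_jet l u f f1 f2 f3 f4 Hf
             (fun t => cosh (a - t) - cos (a - t)) (fun t => - sinh (a - t) - sin (a - t))
             (fun t => cosh (a - t) + cos (a - t)) (fun t => - sinh (a - t) + sin (a - t)))
    by (assumption
        || (apply (is_derive_hyptrig a 0 1 0 (-1)) + apply (is_derive_hyptrig a (-1) 0 (-1) 0)
            + apply (is_derive_hyptrig a 0 1 0 1) + apply (is_derive_hyptrig a (-1) 0 1 0));
          intros; ring).
  unfold jet. rewrite Rminus_diag, sinh_0, cosh_0, sin_0, cos_0.
  replace (a - x) with (- (x - a)) by ring.
  rewrite sinh_neg, cosh_neg, sin_neg, cos_neg.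
  destruct (f a), (f x), (f1 x), (f2 x), (f3 x), (f2 a), (f1 a), (f3 a);
    apply injective_projections; simpl; field.
Qed.

End KernelIdentities.

Lemma interpolation_identity (u v y0 y1 y2 y3 : R) :
  let d := v - u in
  let Cc := cosh d in let c := cos d in let S := sinh d in let s := sin d in
  let A1 := 1/2 * ((sin u - sinh u) * y3 + (cosh u - cos u) * y2 - (sinh u + sin u) * y1 + (cosh u + cos u) * y0) in
  let B1 := 1/2 * ((cosh u - cos u) * y3 - (sinh u + sin u) * y2 + (cosh u + cos u) * y1 + (sin u - sinh u) * y0) in
  let A2 := 1/2 * ((sin v - sinh v) * y3 + (cosh v - cos v) * y2 - (sinh v + sin v) * y1 + (cosh v + cos v) * y0) in
  let B2 := 1/2 * ((cosh v - cos v) * y3 - (sinh v + sin v) * y2 + (cosh v + cos v) * y1 + (sin v - sinh v) * y0) in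
  (2 - 2 * Cc * c) * y0 =
    A1 * ((Cc - c) * (cosh v - cos v) - (S + s) * (sinh v - sin v))
  + B1 * ((Cc - c) * (sinh v - sin v) - (S - s) * (cosh v - cos v))
  + A2 * ((Cc - c) * (cosh u - cos u) + (S + s) * (sinh u - sin u))
  + B2 * ((Cc - c) * (sinh u - sin u) + (S - s) * (cosh u - cos u)).
Proof.
  intros d Cc c S s A1 B1 A2 B2; subst d Cc c S s A1 B1 A2 B2.
  rewrite cosh_minus, sinh_minus, cos_minus, sin_minus.
  pose proof (cosh2_sinh2 u); pose proof (cosh2_sinh2 v).
  pose proof (sin2_cos2 u); pose proof (sin2_cos2 v). unfold Rsqr in *.
  (* nsatz sees 1/2 as an atom *)
  assert (Hhalf : 2 * (1/2) = 1) by field.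
  nsatz.
Qed.
Theorem mainTheorem10 (l u : Rbar) (a1 a2 : R) :
  in_open_interval l u a1 -> in_open_interval l u a2 ->
  cosh (a1 - a2) * cos (a1 - a2) <> 1 ->
  forall (f f1 f2 f3 f4 : R -> C),
  C4_on l u f f1 f2 f3 f4 ->
  forall x : R, in_open_interval l u x ->
  let d := a1 - a2 in
  let Cc := cosh d in let c := cos d in
  let S := sinh d in let s := sin d in
  let K := 2 - 2 * Cc * c in
  let g := fun t => (f4 t - f t)%C in
  (RtoC K * f x =
     (f a1 + RtoC (1/2) * CInt (fun t => (g t * RtoC (sinh (a1 - t) - sin (a1 - t)))%C) a1 x)
       * RtoC ((Cc - c) * (cosh (x - a2) - cos (x - a2)) - (S + s) * (sinh (x - a2) - sin (x - a2)))
   + (f1 a1 + RtoC (1/2) * CInt (fun t => (g t * RtoC (cosh (a1 - t) - cos (a1 - t)))%C) a1 x)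
       * RtoC ((Cc - c) * (sinh (x - a2) - sin (x - a2)) - (S - s) * (cosh (x - a2) - cos (x - a2)))
   + (f a2 + RtoC (1/2) * CInt (fun t => (g t * RtoC (sinh (a2 - t) - sin (a2 - t)))%C) a2 x)
       * RtoC ((Cc - c) * (cosh (x - a1) - cos (x - a1)) + (S + s) * (sinh (x - a1) - sin (x - a1)))
   + (f1 a2 + RtoC (1/2) * CInt (fun t => (g t * RtoC (cosh (a2 - t) - cos (a2 - t)))%C) a2 x)
       * RtoC ((Cc - c) * (sinh (x - a1) - sin (x - a1)) + (S - s) * (cosh (x - a1) - cos (x - a1))))%C.
Proof.
  (* The identity holds even when K = 0; the hypothesis only makes it a formula for f. *)
  intros Ha1 Ha2 _ f f1 f2 f3 f4 Hf x Hx; cbv zeta.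
  rewrite !(sinh_sin_kernel_identity l u f f1 f2 f3 f4 Hf), !(cosh_cos_kernel_identity l u f f1 f2 f3 f4 Hf)
    by assumption.
  replace (a1 - a2) with ((x - a2) - (x - a1)) by ring.
  destruct (f x) as [p0 q0], (f1 x) as [p1 q1], (f2 x) as [p2 q2], (f3 x) as [p3 q3].
  pose proof (interpolation_identity (x - a1) (x - a2) p0 p1 p2 p3) as Hre.
  pose proof (interpolation_identity (x - a1) (x - a2) q0 q1 q2 q3) as Him.
  cbv zeta in Hre, Him.
  apply injective_projections; simpl; lra.
Qed.
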